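(* Let $n\ge1$, $X=\{1,\dots,n\}$, $\mathcal{A}$ the algebra of all functions $X\to\mathbb{R}$ with pointwise operations, $\sigma:X\to X$ a bijection and $\tilde{\sigma}(f)=f\circ\sigma^{-1}$. In the skew polynomial ring $\mathcal{A}[x,\tilde{\sigma},0]$, the centralizer of $\mathcal{A}$ is $$C(\mathcal{A})=\Big\{\sum_{k=0}^m f_kx^k : m\ge0,\ f_k\in\mathcal{A},\ f_k=0 \text{ on } Sep^k(X) \text{ for all } k\Big\}.$$
   Context: For a ring $R$ with endomorphism $\sigma$ and $\sigma$-derivation $\Delta$ (additive map with $\Delta(ab)=\sigma(a)\Delta(b)+\Delta(a)b$), the Ore extension $R[x,\sigma,\Delta]$ is the ring generated by $R$ and an element $x$ such that $1,x,x^2,\dots$ is a basis of it as a left $R$-module and $xr=\sigma(r)x+\Delta(r)$ for all $r\in R$; $R[x,\sigma,0]$ is the case $\Delta=0$. The centralizer of a subset $T$ is the set of elements commuting with every element of $T$. For an integer $k$, $Sep^k(X)=\{p\in X: \sigma^k(p)\neq p\}$ (so $Sep^0(X)=\emptyset$). *)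

From HB Require Import structures.
From mathcomp Require Import all_boot all_order all_algebra all_fingroup.
Set Implicit Arguments. Unset Strict Implicit. Unset Printing Implicit Defensive.
Import Order.TTheory GRing.Theory Num.Theory.
Local Open Scope ring_scope.

Definition fnalg (R : realFieldType) (n : nat) := {ffun 'I_n -> R}.

Definition sigt (R : realFieldType) (n : nat) (s : {perm 'I_n})
  (f : {ffun 'I_n -> R}) : {ffun 'I_n -> R} :=
  [ffun x => f ((s^-1)%g x)].

(* Elements of the skew polynomial ring A[x, sigma~, 0] are represented by
   their (left) coefficient sequences p = [:: f_0; f_1; ...; f_m] standing for
   \sum_k f_k x^k; two sequences represent the same element iff they have the
   same coefficients (trailing zeros are irrelevant), see [skew_eq]. *)

(* Product in A[x, sigma~, 0]: (f x^i)(g x^j) = f sigma~^i(g) x^(i+j). *)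
Definition skew_mul (R : realFieldType) (n : nat) (s : {perm 'I_n})
  (p q : seq {ffun 'I_n -> R}) : seq {ffun 'I_n -> R} :=
  mkseq (fun k => \sum_(i < k.+1) p`_i * iter i (sigt s) q`_(k - i))
        (size p + size q).-1.

Definition skew_eq (R : realFieldType) (n : nat) (p q : seq {ffun 'I_n -> R}) : Prop :=
  forall k : nat, p`_k = q`_k.

Definition in_centralizer_A (R : realFieldType) (n : nat) (s : {perm 'I_n})
  (p : seq {ffun 'I_n -> R}) : Prop :=
  forall a : {ffun 'I_n -> R}, skew_eq (skew_mul s p [:: a]) (skew_mul s [:: a] p).

Definition Sep (n : nat) (s : {perm 'I_n}) (k : nat) : {set 'I_n} :=
  [set x | (s ^+ k)%g x != x].

From HB Require Import structures.
From mathcomp Require Import all_boot all_order all_algebra all_fingroup.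
Import Order.TTheory GRing.Theory Num.Theory.
Local Open Scope ring_scope.

(* Since A is commutative, (f_k x^k) a = f_k sigma~^k(a) x^k equals a f_k x^k
   for all a exactly when f_k (a o sigma^-k - a) = 0 for all a; testing with
   the indicator function of a point x shows that this forces f_k(x) = 0 when
   sigma^k moves x, and it clearly holds when sigma^k fixes x. *)

Lemma permV_fix (T : finType) (t : {perm T}) (x : T) :
  ((t^-1)%g x == x) = (t x == x).
Proof.
by apply/eqP/eqP => tx; rewrite -[in LHS]tx ?permKV ?permK.
Qed.

Section SkewPolynomials.

Variables (R : realFieldType) (n : nat) (s : {perm 'I_n}).

Lemma iter_sigt (k : nat) (a : {ffun 'I_n -> R}) :
  iter k (sigt s) a = sigt (s ^+ k)%g a.
Proof.
elim: k => [|k IHk] /=; apply/ffunP => x; rewrite !ffunE ?expg0 ?invg1 ?perm1 //.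
by rewrite IHk ffunE expgSr invMg permM.
Qed.

Lemma coef_skew_mul_constr (p : seq {ffun 'I_n -> R}) a k :
  (skew_mul s p [:: a])`_k = p`_k * sigt (s ^+ k)%g a.
Proof.
rewrite /skew_mul addn1 /=.
have [kp | pk] := ltnP k (size p); last first.
  by rewrite !nth_default ?mul0r ?size_mkseq.
rewrite nth_mkseq // big_ord_recr /= subnn iter_sigt big1 ?add0r // => i _.
rewrite -(subnSK (ltn_ord i)) /= nth_nil iter_sigt.
by apply/ffunP => x; rewrite !ffunE mulr0.
Qed.

Lemma coef_skew_mul_constl (p : seq {ffun 'I_n -> R}) a k :
  (skew_mul s [:: a] p)`_k = a * p`_k.
Proof.
rewrite /skew_mul add1n /=.
have [kp | pk] := ltnP k (size p); last first.
  by rewrite !nth_default ?mulr0 ?size_mkseq.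
rewrite nth_mkseq // big_ord_recl /= subn0 big1 ?addr0 // => i _.
by rewrite /= nth_nil mul0r.
Qed.

Lemma in_centralizer_AE (p : seq {ffun 'I_n -> R}) :
  in_centralizer_A s p <->
  (forall k a, p`_k * sigt (s ^+ k)%g a = a * p`_k).
Proof.
by split=> cp x y; move: (cp y x);
  rewrite coef_skew_mul_constr coef_skew_mul_constl.
Qed.

Lemma sigt_commute_supp (t : {perm 'I_n}) (f : {ffun 'I_n -> R}) :
  (forall a, f * sigt t a = a * f) <-> (forall x, t x != x -> f x = 0).
Proof.
split=> [cf x tx | f0 a].
  have := congr1 (fun g : {ffun 'I_n -> R} => g x) (cf [ffun y => (y == x)%:R]).
  by rewrite !ffunE permV_fix (negbTE tx) eqxx mulr0 mul1r => <-.
apply/ffunP => x; rewrite !ffunE.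
have [-> | tx] := eqVneq ((t^-1)%g x) x; first by rewrite mulrC.
by rewrite f0 ?mul0r ?mulr0 // -permV_fix.
Qed.

End SkewPolynomials.

Theorem theorem3 (R : realFieldType) (n : nat) (hn : (0 < n)%N)
  (s : {perm 'I_n}) (p : seq {ffun 'I_n -> R}) :
  in_centralizer_A s p <->
  (forall (k : nat) (x : 'I_n), x \in Sep s k -> p`_k x = 0).
Proof.
split=> [/in_centralizer_AE cp k x | p0].
  by rewrite inE; move: x; apply/sigt_commute_supp; apply: cp.
apply/in_centralizer_AE => k.
by apply/sigt_commute_supp => x sx; apply: p0; rewrite inE.
Qed.
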